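(* Let $\bar x,\bar x'\in\bar{\mathcal X}$ with $\bar x\neq\bar x'$, and let $Q_{\bar x},Q_{\bar x'}$ be their orthogonal projections onto $\mathcal M$. Then with probability $1$, $Q_{\bar x}\neq Q_{\bar x'}$.
   Context: $\mathcal M\subset\mathbb R^d$ is an $m$-dimensional ($m<d$) smooth compact connected manifold without boundary with reach $R>0$; $\mu$ is a probability measure on $\mathcal M$ with a density with respect to volume; natural data are i.i.d. $\sim\mu$, and each augmented point $\bar x$ is generated from a natural point $x$ with law $(\varepsilon_{\rm p}\sqrt{2\pi})^{-d}\exp(-\|x-\bar x\|^2/(2\varepsilon_{\rm p}^2))$, where $\varepsilon_{\rm p}=\eta^{1/d}\varepsilon^{\tau+1}$ with $\tau,\eta>0$ and $0<\varepsilon\le\min\{1,R/2\}$. It is assumed that all augmented points lie in the tubular neighbourhood $\{x+h:x\in\mathcal M, h\perp T_x\mathcal M,\|h\|<\varepsilon^{\tau+1}\}$, so each has a unique nearest point (orthogonal projection) $Q_{\bar x}$ on $\mathcal M$. *)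

From HB Require Import structures.
From mathcomp Require Import all_boot all_order all_algebra.
From mathcomp Require Import all_classical all_reals all_analysis.

Unset Printing Implicit Defensive.

Import Order.TTheory GRing.Theory Num.Theory.
Import numFieldNormedType.Exports.

Local Open Scope classical_set_scope.
Local Open Scope ring_scope.

Definition enorm {R : realType} {d : nat} (v : 'rV[R]_d) : R :=
  Num.sqrt (\sum_(i < d) v ord0 i ^+ 2).

Definition edot {R : realType} {d : nat} (u v : 'rV[R]_d) : R :=
  \sum_(i < d) u ord0 i * v ord0 i.

Definition Rd (R : realType) (d : nat) := g_sigma_algebraType (@open 'rV[R]_d).

Definition is_nearest {R : realType} {d : nat} (M : set 'rV[R]_d) (y p : 'rV[R]_d) :=
  M p /\ forall q, M q -> enorm (y - p) <= enorm (y - q).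

Definition unique_nearest_within {R : realType} {d : nat} (M : set 'rV[R]_d) (r : R) :=
  forall y, (exists q, M q /\ enorm (y - q) < r) -> exists! p, is_nearest M y p.

Definition reach {R : realType} {d : nat} (M : set 'rV[R]_d) : \bar R :=
  ereal_sup [set r%:E | r in [set r : R | 0 <= r /\ unique_nearest_within M r]].

Fixpoint iter_dir {R : realType} {m d : nat} (vs : seq 'rV[R]_m)
    (f : 'rV[R]_m -> 'rV[R]_d) : 'rV[R]_m -> 'rV[R]_d :=
  if vs is v :: vs' then fun x => 'D_v (iter_dir vs' f) x else f.

Definition smooth_on {R : realType} {m d : nat} (W : set 'rV[R]_m)
    (f : 'rV[R]_m -> 'rV[R]_d) :=
  forall (vs : seq 'rV[R]_m) x, W x ->
    {for x, continuous (iter_dir vs f)} /\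
    forall v, derivable (iter_dir vs f) x v.

Definition embedded_submanifold {R : realType} (m d : nat) (M : set 'rV[R]_d) :=
  forall p, M p ->
  exists (U : set 'rV[R]_d) (W : set 'rV[R]_m) (phi : 'rV[R]_m -> 'rV[R]_d),
    [/\ [/\ open U, U p, open W & smooth_on W phi],
        phi @` W = M `&` U,
        {in W &, injective phi},
        (* the inverse M `&` U -> W is continuous *)
        (forall w, W w -> forall e, 0 < e -> exists2 del, 0 < del &
           forall w', W w' -> enorm (phi w' - phi w) < del -> enorm (w' - w) < e)
      &
        (forall w, W w -> forall v, 'D_v phi w = 0 -> v = 0)].

Definition tangent {R : realType} {d : nat} (M : set 'rV[R]_d) (x v : 'rV[R]_d) :=
  exists (gamma : R -> 'rV[R]_d) (e : R), [/\ 0 < e,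
    (forall t, `|t| < e -> M (gamma t)), gamma 0 = x & is_derive (0 : R) (1 : R) gamma v].

Definition tube {R : realType} {d : nat} (M : set 'rV[R]_d) (r : R) : set 'rV[R]_d :=
  [set y | exists x h, [/\ M x, (forall v, tangent M x v -> edot h v = 0),
                           enorm h < r & y = x + h]].

Definition ediam {R : realType} {d : nat} (C : set 'rV[R]_d) : \bar R :=
  ereal_sup [set z | exists x y, [/\ C x, C y & z = (enorm (x - y))%:E]].

Definition hausdorff_pre {R : realType} {d : nat} (m : nat) (del : R)
    (A : set 'rV[R]_d) : \bar R :=
  ereal_inf [set s | exists C : nat -> set 'rV[R]_d,
    [/\ A `<=` \bigcup_k C k, (forall k, (ediam (C k) < del%:E)%E)
      & s = (\sum_(0 <= k <oo) (((fine (ediam (C k)) / 2) ^+ m)%:E))%E]].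

Definition hausdorff {R : realType} {d : nat} (m : nat) (A : set 'rV[R]_d) : \bar R :=
  ereal_sup [set hausdorff_pre m del A | del in [set del : R | 0 < del]].

Definition has_volume_density {R : realType} {d : nat} (m : nat)
    (M : set 'rV[R]_d) (mu : set (Rd R d) -> \bar R) :=
  forall A : set (Rd R d), measurable A -> hausdorff m (A `&` M) = 0%E -> mu A = 0%E.

Fixpoint iint {R : realType} (n : nat) (F : (nat -> R) -> \bar R) : \bar R :=
  match n with
  | 0 => F (fun _ => 0)
  | n'.+1 => (\int[@lebesgue_measure R]_t
               iint n' (fun z => F (fun k => if k == n' then t else z k)))%E
  end.

Definition vec {R : realType} (d : nat) (z : nat -> R) : 'rV[R]_d := \row_(i < d) z i.

Definition gpdf {R : realType} {d : nat} (s : R) (u : 'rV[R]_d) : R :=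
  (s * Num.sqrt (2 * pi)) ^- d * expR (- (enorm u ^+ 2) / (2 * s ^+ 2)).

(* probability that (xbar, xbar') lands in E, where xbar, xbar' are independent
   augmentations (noise level s) of the natural points x, x' *)
Definition aug_pair {R : realType} (d : nat) (s : R) (x x' : 'rV[R]_d)
    (E : set ('rV[R]_d * 'rV[R]_d)) : \bar R :=
  iint d (fun z => iint d (fun z' =>
    ((\1_E (vec d z, vec d z') : R) * gpdf s (vec d z - x) * gpdf s (vec d z' - x'))%:E)).

(* xbar, xbar' augmentations of two distinct natural points x, x' i.i.d. ~ mu *)
Definition aug_prob_indep {R : realType} (d : nat) (mu : probability (Rd R d) R)
    (s : R) (E : set ('rV[R]_d * 'rV[R]_d)) : \bar R :=
  (\int[mu]_x \int[mu]_x' aug_pair d s x x' E)%E.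

(* xbar, xbar' two augmentations of the same natural point x ~ mu *)
Definition aug_prob_same {R : realType} (d : nat) (mu : probability (Rd R d) R)
    (s : R) (E : set ('rV[R]_d * 'rV[R]_d)) : \bar R :=
  (\int[mu]_x aug_pair d s x x E)%E.

From HB Require Import structures.
From mathcomp Require Import all_boot all_order all_algebra.
From mathcomp Require Import all_classical all_reals all_analysis.
From mathcomp Require Import ring lra.
Import Order.TTheory GRing.Theory Num.Theory.
Import numFieldNormedType.Exports.
Local Open Scope classical_set_scope.
Local Open Scope ring_scope.

(* If the nearest point p of xbar on M is known, then xbar' can share it only
   if xbar' - p is normal to M at p: along any curve of M through p the squared
   distance to xbar' is minimal at p, so its first-order term vanishes.  Below
   the reach nearest points are unique, so for each xbar the admissible xbar'
   form a subset of an affine hyperplane (M has positive dimension), which is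
   Lebesgue-null.  Hence the Gaussian integral over xbar' vanishes for every
   xbar and every pair of natural points, whatever their law. *)

Section edot.
Context {R : realType} {d : nat}.
Implicit Types u v w : 'rV[R]_d.

Lemma edot_ge0 u : 0 <= edot u u.
Proof. by apply: sumr_ge0 => i _; rewrite sqr_ge0. Qed.

Lemma enormE u : enorm u = Num.sqrt (edot u u).
Proof. by congr Num.sqrt; apply: eq_bigr => i _; rewrite expr2. Qed.

Lemma edotBl u v w : edot (u - v) w = edot u w - edot v w.
Proof. by rewrite /edot -sumrB; apply: eq_bigr => i _; rewrite !mxE mulrBl. Qed.

Lemma edot_subZ u v (t : R) :
  edot (u - t *: v) (u - t *: v) = edot u u - 2 * t * edot u v + t ^+ 2 * edot v v.
Proof.
rewrite /edot !mulr_sumr -sumrB -big_split; apply: eq_bigr => i _.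
by rewrite !mxE /=; ring.
Qed.

Lemma cvg_edot {T : Type} {F : set_system T} {FF : Filter F}
    {f g : T -> 'rV[R]_d} {u v} :
  f @ F --> u -> g @ F --> v -> (fun x => edot (f x) (g x)) @ F --> edot u v.
Proof.
move=> fu gv; apply: cvg_big => [|i _]; first exact: add_continuous.
have coord (h : T -> 'rV[R]_d) w :
    h @ F --> w -> (fun x => h x ord0 i) @ F --> w ord0 i.
  by move=> hw; exact: (continuous_cvg _ (@coord_continuous R 1 d ord0 i w) hw).
by apply: cvgM; apply: coord.
Qed.

End edot.

Section iterated_integral.
Context {R : realType}.

Lemma iint0_eq n (F : (nat -> R) -> \bar R) :
  (forall z, F z = 0%E) -> iint n F = 0%E.
Proof.
elim: n F => [|n IH] F F0 /=; first exact: F0.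
by rewrite integral0_eq // => t _; apply: IH.
Qed.

Lemma integral_eq0_off_point (g : R -> \bar R) t0 :
  (forall t, t != t0 -> g t = 0%E) -> (\int[@lebesgue_measure R]_t g t = 0)%E.
Proof.
move=> g0; have -> : g = g \_ [set t0].
  apply/funext => t; rewrite /patch; case: ifPn => // t_out.
  by apply: g0; apply: contraNneq t_out => ->; exact/mem_set.
by rewrite -integral_mkcond integral_set1.
Qed.

Lemma iint_eq0_hyperplane n (F : (nat -> R) -> \bar R) (v : nat -> R) c :
  (exists2 i, (i < n)%N & v i != 0) ->
  (forall z, F z != 0%E -> \sum_(i < n) v i * z i = c) -> iint n F = 0%E.
Proof.
elim: n F c => [F c [] //|n IH] F c [i lt_in vi0] hF /=.
have [[j lt_jn vj0]|vn0] := pselect (exists2 j, (j < n)%N & v j != 0).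
  rewrite integral0_eq // => t _; apply: (IH _ (c - v n * t)); first by exists j.
  move=> z /hF; rewrite big_ord_recr /= eqxx => <-.
  rewrite addrK; apply: eq_bigr => k _; by rewrite (ltn_eqF (ltn_ord k)).
have v0 k : (k < n)%N -> v k = 0.
  by move=> lt_kn; apply/eqP; apply: contra_notT vn0 => vk0; exists k.
(* only the last coefficient is nonzero: the integrand in the last variable
   vanishes off the single point t = c / v n *)
have {i lt_in vi0} vn : v n != 0.
  move: lt_in vi0; rewrite ltnS leq_eqVlt => /orP[/eqP -> //| /v0 ->].
  by rewrite eqxx.
apply: (@integral_eq0_off_point _ (c / v n)) => t t_ne.
apply: iint0_eq => z; apply/eqP/negPn/negP => /hF.
rewrite big_ord_recr /= eqxx big1 ?add0r => [vt|k _]; last by rewrite v0 ?mul0r.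
by move: t_ne; rewrite -vt mulrC mulKf ?eqxx.
Qed.

End iterated_integral.

Definition subset_hyperplane {R : realType} {d : nat} (S : set 'rV[R]_d) :=
  exists v c, v != 0 /\ forall y, S y -> edot y v = c.

Lemma aug_pair_eq0 {R : realType} (d : nat) (s : R) (x x' : 'rV[R]_d) E :
  (forall y, [set y' | E (y, y')] !=set0 ->
     subset_hyperplane [set y' | E (y, y')]) ->
  aug_pair d s x x' E = 0%E.
Proof.
move=> slices; apply: iint0_eq => z.
have [/slices [v [c [v0 Ev]]]|empty] :=
  pselect ([set y' | E (vec d z, y')] !=set0); last first.
  apply: iint0_eq => z'; rewrite indicE memNset ?mul0r // => Ez'.
  by apply: empty; exists (vec d z').
(* the coordinates of [v], extended by zero beyond [d] *)
pose vv (i : nat) := \sum_(j < d | (j : nat) == i) v ord0 j.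
have vvE (i : 'I_d) : vv i = v ord0 i by rewrite /vv (big_pred1 i).
apply: (@iint_eq0_hyperplane _ d _ vv c).
  by move/rV0Pn: v0 => [j vj0]; exists j; rewrite ?vvE.
move=> z'; have [/Ev <-|Ez'] := pselect (E (vec d z, vec d z')).
  by move=> _; apply: eq_bigr => i _; rewrite vvE mxE mulrC.
by rewrite indicE memNset // !mul0r eqxx.
Qed.

Lemma cvg_at0_mul_le_eq {R : realType} {f g : R -> R} {a b : R} :
  f @ (0 : R)^' --> a -> g @ (0 : R)^' --> b ->
  (\forall t \near (0 : R)^', t * f t <= t * g t) -> a = b.
Proof.
move=> fa gb fg.
have right_dnbhs : (0 : R)^'+ `=>` 0^' by apply: within_subset => t /gt_eqF ->.
have left_dnbhs : (0 : R)^'- `=>` 0^' by apply: within_subset => t /lt_eqF ->.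
apply/eqP; rewrite eq_le; apply/andP; split.
  apply: (ler_cvg_to (cvg_dnbhs_at_right fa) (cvg_dnbhs_at_right gb)).
  near=> t; rewrite -(ler_pM2l (_ : 0 < t)); last by near: t; apply: nbhs_right_gt.
  by near: t; apply: right_dnbhs.
apply: (ler_cvg_to (cvg_dnbhs_at_left gb) (cvg_dnbhs_at_left fa)).
near=> t; rewrite -(ler_nM2l (_ : t < 0)); last by near: t; apply: nbhs_left_lt.
by near: t; apply: left_dnbhs.
Unshelve. all: by end_near.
Qed.

Lemma nearest_orthogonal_tangent {R : realType} {d : nat} (M : set 'rV[R]_d) y p v :
  is_nearest M y p -> tangent M p v -> edot (y - p) v = 0.
Proof.
move=> [_ p_min] [gamma [e [e0 gammaM gamma0 dgamma]]].
pose q t := t^-1 *: (gamma t - p).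
have qv : q @ (0 : R)^' --> v.
  have -> : q = fun t => t^-1 *: ((gamma \o shift 0) (t *: 1) - gamma 0).
    by apply/funext => t; rewrite /q /= addr0 gamma0 [t *: 1]mulr1.
  rewrite -(@derive_val _ _ _ _ _ _ _ dgamma); exact: ex_derive.
have min_q : \forall t \near (0 : R)^',
    t * (2 * edot (y - p) (q t)) <= t * (t * edot (q t) (q t)).
  near=> t.
  have t0 : t != 0 by near: t; exact: nbhs_dnbhs_neq.
  have te : `|t| < e by near: t; exact: dnbhs0_lt.
  have := p_min _ (gammaM t te).
  rewrite !enormE ler_sqrt ?edot_ge0 // (_ : y - gamma t = (y - p) - t *: q t).
    by rewrite edot_subZ; nra.
  by rewrite /q scalerA mulfV // scale1r opprB addrA subrK.
have qq0 : (fun t => t * edot (q t) (q t)) @ (0 : R)^' --> 0.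
  rewrite -[X in _ --> X](mul0r (edot v v)).
  by apply: cvgM; [exact: nbhs_dnbhs | exact: cvg_edot].
have : 2 * edot (y - p) v = 0.
  exact: cvg_at0_mul_le_eq
    (cvgM (cvg_cst (2 : R)) (cvg_edot (cvg_cst (y - p)) qv)) qq0 min_q.
lra.
Unshelve. all: by end_near.
Qed.

Lemma derive_chart_tangent {R : realType} {m d : nat} {M : set 'rV[R]_d}
    {W : set 'rV[R]_m} {phi : 'rV[R]_m -> 'rV[R]_d} {w v} :
  open W -> phi @` W `<=` M -> W w -> derivable phi w v ->
  tangent M (phi w) ('D_v phi w).
Proof.
move=> oW phiWM Ww dphi.
have near_W : \forall t \near (0 : R), W (t *: v + w).
  have line_cvg : t *: v + w @[t --> (0 : R)] --> w.
    rewrite -[X in _ --> X]add0r -(scale0r v).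
    exact: cvgD (cvgZ (@cvg_id _ (nbhs (0 : R))) (cvg_cst v)) (cvg_cst w).
  by apply: line_cvg; exact: open_nbhs_nbhs.
have /nbhs_norm0P [e e0 eW] := near_W.
exists (fun t => phi (t *: v + w)), e; split => //.
- by move=> t /eW Wt; apply: phiWM; exists (t *: v + w).
- by rewrite scale0r add0r.
have dq : (fun t : R => t^-1 *: (((fun t => phi (t *: v + w)) \o shift 0) (t *: 1)
                                 - phi (0 *: v + w)))
          = fun t => t^-1 *: ((phi \o shift w) (t *: v) - phi w).
  by apply/funext => t; rewrite /= addr0 [t *: 1]mulr1 scale0r add0r.
by split; rewrite /derivable /derive dq.
Qed.

Lemma nearest_fibre_subset_hyperplane {R : realType} {m d : nat}
    {M : set 'rV[R]_d} {p} :
  (0 < m)%N -> embedded_submanifold m d M -> M p ->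
  subset_hyperplane [set y | is_nearest M y p].
Proof.
move=> m0 emb Mp.
have [U [W [phi [[_ Up oW phi_smooth] phiW _ _ immersion]]]] := emb p Mp.
have phiWM : phi @` W `<=` M by rewrite phiW => z [].
have [w Ww <-] : (phi @` W) p by rewrite phiW.
pose e1 : 'rV[R]_m := delta_mx ord0 (Ordinal m0).
have e1_neq0 : e1 != 0.
  apply/eqP => /matrixP /(_ ord0 (Ordinal m0)) /eqP.
  by rewrite !mxE !eqxx oner_eq0.
have tangent_e1 := derive_chart_tangent oW phiWM Ww ((phi_smooth [::] w Ww).2 e1).
exists ('D_e1 phi w), (edot (phi w) ('D_e1 phi w)); split.
  by apply: contraNneq e1_neq0 => /(immersion w Ww) ->.
move=> y /nearest_orthogonal_tangent /(_ tangent_e1) /eqP.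
by rewrite edotBl subr_eq0 => /eqP.
Qed.

Lemma tube_nearest_uniq {R : realType} {d : nat} {M : set 'rV[R]_d} {r y p p'} :
  (r%:E < reach M)%E -> tube M r y ->
  is_nearest M y p -> is_nearest M y p' -> p = p'.
Proof.
move=> /ereal_sup_gt [_ [r' [_ uniq_r']] <-]; rewrite lte_fin => lt_rr'.
move=> [x [h [Mx _ hr ->]]] yp yp'.
have [q [_ q_uniq]] : exists! q, is_nearest M (x + h) q.
  by apply: uniq_r'; exists x; rewrite addrAC subrr add0r (lt_trans hr).
by rewrite -(q_uniq _ yp) -(q_uniq _ yp').
Qed.

Theorem lemma3p1 (R : realType) (m d : nat) (M : set 'rV[R]_d)
    (Rch tau eta eps : R) (mu : probability (Rd R d) R) :
  (0 < m)%N -> (m < d)%N ->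
  embedded_submanifold m d M -> compact M -> connected M ->
  reach M = Rch%:E -> 0 < Rch ->
  mu M = 1%E -> has_volume_density m M mu ->
  0 < tau -> 0 < eta -> 0 < eps -> eps <= Num.min 1 (Rch / 2) ->
  let eps_p := eta `^ (d%:R^-1) * eps `^ (tau + 1) in
  let bad := [set yy : 'rV[R]_d * 'rV[R]_d |
                [/\ tube M (eps `^ (tau + 1)) yy.1,
                    tube M (eps `^ (tau + 1)) yy.2
                  & exists p, is_nearest M yy.1 p /\ is_nearest M yy.2 p]] in
  aug_prob_indep d mu eps_p bad = 0%E /\ aug_prob_same d mu eps_p bad = 0%E.
Proof.
move=> m0 _ emb _ _ reachM Rch0 _ _ tau0 _ eps0 eps_le eps_p bad.
have lt_reach : ((eps `^ (tau + 1))%:E < reach M)%E.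
  move: eps_le; rewrite reachM lte_fin le_min => /andP[eps1 eps_half].
  have : eps `^ (tau + 1) <= eps by rewrite ge1r_powR ?eps0 // lerDr ltW.
  move/le_lt_trans; apply; apply: le_lt_trans eps_half _.
  by rewrite ltr_pdivrMr // ltr_pMr // ltr1n.
have bad_slices y :
    [set y' | bad (y, y')] !=set0 -> subset_hyperplane [set y' | bad (y, y')].
  move=> [_ [/= y_tube _ [p [y_p _]]]].
  have [v [c [v0 fibre]]] := nearest_fibre_subset_hyperplane m0 emb y_p.1.
  exists v, c; split => // y' [/= _ _ [p' [y_p' y'_p']]].
  by apply: fibre; rewrite /= (tube_nearest_uniq lt_reach y_tube y_p y_p').
split; rewrite /aug_prob_indep /aug_prob_same integral0_eq // => x _.
  by rewrite integral0_eq // => x' _; exact: aug_pair_eq0.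
exact: aug_pair_eq0.
Qed.
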